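(* Let $G$ be a group of order $9$ acting on $\mathbb P^1\times\mathbb P^1\times\mathbb P^1$ (over $\mathbb C$) such that the action is free outside a finite subset. If $G$ permutes the three factors of $\mathbb P^1\times\mathbb P^1\times\mathbb P^1$ nontrivially, then $G\cong\mathbb Z_9$ and there are affine coordinates $x,y,z$ on the three copies of $\mathbb P^1$ such that a generator $g$ of $G$ acts by $g\colon(x,y,z)\mapsto(y,z,\omega x)$, where $\omega$ is a primitive cube root of $1$.
   Context: The action is by automorphisms; ''free outside a finite subset'' means that the set of points with nontrivial stabilizer is finite. Any automorphism of $\mathbb P^1\times\mathbb P^1\times\mathbb P^1$ permutes the three projections, giving a homomorphism to the symmetric group $S_3$; ''permutes the factors nontrivially'' means this homomorphism is nontrivial on $G$. *)

From HB Require Import structures.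
From mathcomp Require Import all_boot all_order all_algebra all_fingroup all_solvable.
From mathcomp Require Import reals complex.
Set Implicit Arguments. Unset Strict Implicit. Unset Printing Implicit Defensive.
Import GRing.Theory.
Local Open Scope ring_scope.

(* The projective line over a field F : None is the point at infinity,
   Some x is the point with affine coordinate x. *)
Definition P1 (F : fieldType) := option F.

Definition P1cube (F : fieldType) := {ffun 'I_3 -> option F}.

Definition mob (F : fieldType) (A : 'M[F]_2) (p : option F) : option F :=
  let a := A ord0 ord0 in let b := A ord0 ord_max in
  let c := A ord_max ord0 in let d := A ord_max ord_max in
  match p with
  | Some x => if c * x + d == 0 then None else Some ((a * x + b) / (c * x + d))
  | None => if c == 0 then None else Some (a / c)
  end.

(* Every automorphism of (P^1)^3 is of this
   form (Aut = PGL_2^3 x| S_3); sigma is uniquely determined by f and gives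
   the homomorphism Aut((P^1)^3) -> S_3. *)
Definition aut_with_perm (F : fieldType) (f : P1cube F -> P1cube F)
  (sigma : 'S_3) : Prop :=
  exists M : 'I_3 -> 'M[F]_2,
    (forall i, M i \in unitmx) /\
    forall p : P1cube F, f p = [ffun i => mob (M i) (p (sigma i))].

Definition is_aut (F : fieldType) (f : P1cube F -> P1cube F) : Prop :=
  exists sigma, aut_with_perm f sigma.

Definition is_aut_action (F : fieldType) (gT : finGroupType) (G : {group gT})
  (act : gT -> P1cube F -> P1cube F) : Prop :=
  (forall g, g \in G -> is_aut (act g)) /\
  (forall p, act 1%g p = p) /\
  (forall g h, g \in G -> h \in G -> forall p, act (g * h)%g p = act g (act h p)).

Definition free_outside_finite (F : fieldType) (gT : finGroupType)
  (G : {group gT}) (act : gT -> P1cube F -> P1cube F) : Prop :=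
  exists s : seq (P1cube F),
    forall p, (exists2 g, g \in G & (g != 1)%g /\ act g p = p) -> p \in s.

Definition permutes_factors_nontrivially (F : fieldType) (gT : finGroupType)
  (G : {group gT}) (act : gT -> P1cube F -> P1cube F) : Prop :=
  exists2 g, g \in G & exists sigma : 'S_3, sigma != 1%g /\ aut_with_perm (act g) sigma.

Definition coord_change (F : fieldType) (N : 'I_3 -> 'M[F]_2) (p : P1cube F) : P1cube F :=
  [ffun i => mob (N i) (p i)].

Definition model_map (F : fieldType) (w : F) (p : P1cube F) : P1cube F :=
  [ffun i : 'I_3 =>
     if val i == 0%N then p (inord 1)
     else if val i == 1%N then p (inord 2)
     else mob (\matrix_(k < 2, l < 2) (if (val k == 0%N) && (val l == 0%N) then w
                                      else if (val k == 1%N) && (val l == 1%N) then 1 else 0))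
              (p (inord 0))].

(* The permutation of the factors induced by an element of G has order dividing
   gcd(9, |S_3|) = 3, so up to replacing g by g^2 some g in G acts by
   (g p)_i = M_i (p_(i+1)).  Then g^3 acts on the last factor by the monodromy
   D = M_2 M_0 M_1.  If D were trivial, g would fix the whole curve
   t |-> (M_0 M_1 t, M_1 t, t), contradicting freeness; hence g^3 <> 1, g has
   order 9 and generates G.  As g^9 = 1, D is a Moebius transformation of order 3,
   so its matrix has trace^2 = det and distinct eigenvalues whose ratio w is a
   primitive cube root of 1; diagonalizing D by P, the coordinates
   (M_0 M_1 P, M_1 P, P) turn g into (x, y, z) |-> (y, z, w x). *)

From HB Require Import structures.
From mathcomp Require Import all_boot all_order all_algebra all_fingroup all_solvable.
From mathcomp Require Import reals complex.
From mathcomp Require Import alt ring.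
Set Implicit Arguments. Unset Strict Implicit. Unset Printing Implicit Defensive.
Import GRing.Theory Num.Theory.

Section Perm3.
Local Open Scope group_scope.

Definition cyc3 : 'S_3 := perm (@ordS_inj 3).

Lemma cyc3E i : cyc3 i = ordS i. Proof. exact: permE. Qed.

Lemma odd_perm_order3 (T : finType) (s : {perm T}) : s ^+ 3 = 1 -> ~~ odd_perm s.
Proof.
move=> s3; have -> : s = s ^+ 2 * s ^+ 2 by rewrite -expgD expgS s3 mulg1.
by rewrite odd_permM addbb.
Qed.

Lemma cyc3_order3 : cyc3 ^+ 3 = 1.
Proof.
by apply/permP => i; rewrite permX perm1 /= !cyc3E; apply: val_inj; case: i => [[|[|[|]]] ?].
Qed.

Lemma cyc3_neq1 : cyc3 != 1.
Proof. by apply/eqP => /permP/(_ ord0); rewrite cyc3E perm1 => /(congr1 val). Qed.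

Lemma order_cyc3 : #[cyc3] = 3.
Proof. exact: nt_prime_order cyc3_order3 cyc3_neq1. Qed.

Lemma cycle_cyc3 : <[cyc3]> = 'Alt_('I_3).
Proof.
have cardA : #|'Alt_('I_3)| = 3.
  by apply/eqP; rewrite -(eqn_pmul2l (isT : 0 < 2)) card_Alt card_ord.
apply/eqP; rewrite eqEcard cycle_subG Alt_even odd_perm_order3 ?cyc3_order3 //.
by rewrite cardA -orderE order_cyc3.
Qed.

Lemma perm3_order3 (s : 'S_3) : s ^+ 3 = 1 -> s != 1 -> s = cyc3 \/ s = cyc3 ^+ 2.
Proof.
move=> s3 s1; have : s \in <[cyc3]> by rewrite cycle_cyc3 Alt_even odd_perm_order3.
case/cyclePmin; rewrite order_cyc3 => -[|[|[|//]]] _ s_def.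
- by rewrite s_def expg0 eqxx in s1.
- by left; rewrite s_def expg1.
- by right.
Qed.
End Perm3.

Local Open Scope ring_scope.

Section Matrix2.
Variable F : fieldType.

Local Notation j1 := (ord_max : 'I_2).

Definition mx2 (a b c d : F) : 'M[F]_2 :=
  \matrix_(i, j) if i == ord0 then (if j == ord0 then a else b) else (if j == ord0 then c else d).

Definition col2 (u v : F) : 'cV[F]_2 := \col_i if i == ord0 then u else v.

Lemma ord2P (i : 'I_2) : i = ord0 \/ i = j1.
Proof. by case: i => [[|[|]] ?]; [left | right |]; try apply: val_inj. Qed.

Lemma mx2_eta (A : 'M[F]_2) : A = mx2 (A ord0 ord0) (A ord0 j1) (A j1 ord0) (A j1 j1).
Proof. by apply/matrixP => i j; rewrite mxE; case: (ord2P i) => ->; case: (ord2P j) => ->. Qed.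

Lemma col2_eta (v : 'cV[F]_2) : v = col2 (v ord0 0) (v j1 0).
Proof. by apply/matrixP => i j; rewrite mxE ord1; case: (ord2P i) => ->. Qed.

Lemma mx2_inj a b c d a' b' c' d' :
  mx2 a b c d = mx2 a' b' c' d' -> [/\ a = a', b = b', c = c' & d = d'].
Proof.
move/matrixP => e; split; [move: (e ord0 ord0) | move: (e ord0 j1) | move: (e j1 ord0) | move: (e j1 j1)].
all: by rewrite !mxE.
Qed.

Lemma sum_ord2 (f : 'I_2 -> F) : \sum_i f i = f ord0 + f j1.
Proof. by rewrite big_ord_recl big_ord1; congr (_ + f _); apply: val_inj. Qed.

Lemma mulmx2 a b c d a' b' c' d' :
  mx2 a b c d *m mx2 a' b' c' d' =
  mx2 (a * a' + b * c') (a * b' + b * d') (c * a' + d * c') (c * b' + d * d').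
Proof.
by apply/matrixP => i j; rewrite !mxE sum_ord2 !mxE; case: (ord2P i) => ->; case: (ord2P j) => ->.
Qed.

Lemma mulmx2_col a b c d u v : mx2 a b c d *m col2 u v = col2 (a * u + b * v) (c * u + d * v).
Proof.
by apply/matrixP => i j; rewrite !mxE sum_ord2 !mxE; case: (ord2P i) => ->.
Qed.

Lemma scale_mx2 k a b c d : k *: mx2 a b c d = mx2 (k * a) (k * b) (k * c) (k * d).
Proof. by apply/matrixP => i j; rewrite !mxE; case: (ord2P i) => ->; case: (ord2P j) => ->. Qed.

Lemma scale_col2 k u v : k *: col2 u v = col2 (k * u) (k * v).
Proof. by apply/matrixP => i j; rewrite !mxE; case: (ord2P i) => ->. Qed.

Lemma scalar_mx2 a : a%:M = mx2 a 0 0 a.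
Proof. by apply/matrixP => i j; rewrite !mxE; case: (ord2P i) => ->; case: (ord2P j) => ->. Qed.

Lemma det_mx2 a b c d : \det (mx2 a b c d) = a * d - b * c.
Proof.
rewrite (expand_det_row _ ord0) sum_ord2 /cofactor !det_mx11 !mxE /=.
by rewrite expr0 expr1 mul1r mulN1r mulrN.
Qed.

Lemma unitmx2 a b c d : (mx2 a b c d \in unitmx) = (a * d - b * c != 0).
Proof. by rewrite unitmxE unitfE det_mx2. Qed.

Lemma mx2_ind (P : 'M[F]_2 -> Prop) : (forall a b c d, P (mx2 a b c d)) -> forall A, P A.
Proof. by move=> PA A; rewrite [A]mx2_eta. Qed.

End Matrix2.

Section Moebius.
Variable F : fieldType.

Local Notation j1 := (ord_max : 'I_2).
Implicit Types (A B : 'M[F]_2) (x : option F).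

(* [mob A] is the action of [A] on the lines of [F^2], read in the affine chart [[x : 1]]. *)
Definition homog (x : option F) : 'cV[F]_2 := if x is Some t then col2 t 1 else col2 1 0.

Definition dehomog (v : 'cV[F]_2) : option F :=
  if v j1 0 == 0 then None else Some (v ord0 0 / v j1 0).

Lemma dehomog_col2 u v : dehomog (col2 u v) = if v == 0 then None else Some (u / v).
Proof. by rewrite /dehomog !mxE. Qed.

Lemma mobE A x : mob A x = dehomog (A *m homog x).
Proof.
elim/mx2_ind: A => a b c d; rewrite /mob !mxE /=.
by case: x => [t|]; rewrite mulmx2_col dehomog_col2 ?mulr1 ?mulr0 ?addr0.
Qed.

Lemma homogK : cancel homog dehomog.
Proof. by case=> [t|]; rewrite dehomog_col2 ?oner_eq0 ?divr1 ?eqxx. Qed.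

Lemma homog_neq0 x : homog x != 0.
Proof.
apply/eqP => /matrixP/(_ (if x is Some _ then j1 else ord0) 0).
by case: x => [t|]; rewrite !mxE /=; apply/eqP; rewrite oner_eq0.
Qed.

Lemma dehomogZ k (v : 'cV[F]_2) : k != 0 -> dehomog (k *: v) = dehomog v.
Proof.
move=> k0; rewrite [v]col2_eta scale_col2 !dehomog_col2 mulf_eq0 (negbTE k0) /=.
by case: eqP => // _; rewrite invfM mulrACA divff // mul1r.
Qed.

Lemma homog_dehomog (v : 'cV[F]_2) : v != 0 -> exists2 k, k != 0 & v = k *: homog (dehomog v).
Proof.
rewrite [v]col2_eta dehomog_col2; set u := v ord0 0; set w := v j1 0 => nz.
have [w0|w0] := eqVneq w 0; last by exists w; rewrite // scale_col2 mulr1 mulrC divfK.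
exists u; last by rewrite w0 scale_col2 mulr1 mulr0.
by apply: contraNneq nz => u0; rewrite u0 w0; apply/eqP/matrixP => i j; rewrite !mxE; case: ifP.
Qed.

Lemma mob_dehomog A (v : 'cV[F]_2) : v != 0 -> mob A (dehomog v) = dehomog (A *m v).
Proof.
by case/homog_dehomog=> k k0 {2}->; rewrite (mobE A) -scalemxAr dehomogZ.
Qed.

Lemma mobM A B x : B \in unitmx -> mob A (mob B x) = mob (A *m B) x.
Proof.
move=> uB; have Bh0 : B *m homog x != 0.
  by apply: contra_neq (homog_neq0 x) => /(congr1 (mulmx (invmx B))); rewrite mulKmx // mulmx0.
by rewrite [mob B x]mobE mob_dehomog // mulmxA -mobE.
Qed.

Lemma mob1 x : mob 1%:M x = x.
Proof. by rewrite mobE mul1mx homogK. Qed.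

Lemma mobZ k A x : k != 0 -> mob (k *: A) x = mob A x.
Proof. by move=> k0; rewrite !mobE -scalemxAl dehomogZ. Qed.

Lemma mob_scalar a x : a != 0 -> mob a%:M x = x.
Proof. by move=> a0; rewrite -scalemx1 mobZ // mob1. Qed.

Lemma mob_inj A : A \in unitmx -> injective (mob A).
Proof. by move=> uA x y /(congr1 (mob (invmx A))); rewrite !mobM // mulVmx // !mob1. Qed.

Lemma mob_id_scalar A : (forall x, mob A x = x) -> is_scalar_mx A.
Proof.
elim/mx2_ind: A => a b c d idA; apply/is_scalar_mxP; exists a; rewrite scalar_mx2.
move: (idA None) (idA (Some 0)) (idA (Some 1)); rewrite /mob !mxE /=.
case: eqP => // -> _; rewrite !mulr0 !add0r mul0r; case: eqP => // /eqP d0 [/eqP].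
rewrite mulf_eq0 invr_eq0 (negbTE d0) orbF => /eqP ->.
by rewrite add0r addr0 mulr1 (negbTE d0) => -[/(congr1 ( *%R^~ d))]; rewrite divfK // mul1r => ->.
Qed.

End Moebius.

Lemma prim_root3 (F : fieldType) (w : F) : 3%:R != 0 :> F -> w ^+ 2 + w + 1 = 0 ->
  3.-primitive_root w.
Proof.
move=> F3 w_eq; have w3 : w ^+ 3 = 1.
  have -> : w ^+ 3 = (w - 1) * (w ^+ 2 + w + 1) + 1 by ring.
  by rewrite w_eq mulr0 add0r.
have [m prim_m /(primeP (isT : prime 3)).2/orP[]/eqP m_eq] := prim_order_exists (isT : 0 < 3)%N w3;
  last by rewrite -m_eq.
move: w_eq; rewrite -[w]expr1 -m_eq (prim_expr_order prim_m) expr1n => /eqP.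
by rewrite (_ : 1 + 1 + 1 = 3%:R) ?(negbTE F3) //; ring.
Qed.

Lemma mx2_cube_scalar_tr2 (F : fieldType) (a b c d : F) :
  is_scalar_mx (mx2 a b c d ^+ 3) -> ~~ is_scalar_mx (mx2 a b c d) ->
  (a + d) ^+ 2 = a * d - b * c.
Proof.
set D := mx2 a b c d; have -> : D ^+ 3 = D *m (D *m D) by rewrite !exprS expr0 mulr1.
case/is_scalar_mxP=> l; rewrite !mulmx2 scalar_mx2 => /mx2_inj[e00 e01 e10 e11] nscal.
apply: subr0_eq; set k := _ - _; apply: contraNeq nscal => k0.
have b0 : b = 0 by apply: (mulIf k0); rewrite mul0r -e01 /k; ring.
have c0 : c = 0 by apply: (mulIf k0); rewrite mul0r -e10 /k; ring.
have ad : a = d.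
  by apply: subr0_eq; apply: (mulIf k0); rewrite mul0r -(subrr l) -{1}e00 -e11 /k; ring.
by apply/is_scalar_mxP; exists a; rewrite /D scalar_mx2 b0 c0 ad.
Qed.

Lemma mx2_diagonalize (F : closedFieldType) (a b c d : F) :
  (a + d) ^+ 2 != 4%:R * (a * d - b * c) ->
  exists m1 m2 (P : 'M[F]_2), [/\ P \in unitmx, m1 + m2 = a + d, m1 * m2 = a * d - b * c &
    mx2 a b c d *m P = P *m mx2 m1 0 0 m2].
Proof.
move=> disc; have [b0|b0] := eqVneq b 0.
  exists a, d, (mx2 (a - d) 0 c 1); split=> //; rewrite ?b0 ?mul0r ?subr0 //.
    rewrite unitmx2 mulr1 mul0r subr0 subr_eq0.
    by apply: contraNneq disc => ->; rewrite b0 mul0r subr0; apply/eqP; ring.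
  by rewrite !mulmx2; congr mx2; ring.
(* (b, m - a) is an eigenvector for each eigenvalue m *)
have [m root_m] : exists m, m ^+ 2 = (a + d) * m - (a * d - b * c).
  have [m] := @solve_monicpoly F 2 (nth 0 [:: - (a * d - b * c); a + d]) isT.
  rewrite !big_ord_recl big_ord0 /= expr0 expr1 addr0 mulr1 => m_root.
  by exists m; rewrite m_root addrC mulrC.
exists m, (a + d - m), (mx2 b b (m - a) (a + d - m - a)); split.
- rewrite unitmx2 (_ : _ - _ = b * (a + d - m - m)); last by ring.
  rewrite mulf_neq0 //; apply: contraNneq disc => e.
  rewrite -subr_eq0 (_ : _ - _ = (a + d - m - m) ^+ 2); first by rewrite e expr0n.
  by ring: root_m.
- by ring.
- by ring: root_m.
- by rewrite !mulmx2; congr mx2; ring: root_m.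
Qed.

Lemma mx2_cube_scalar_conj (F : closedFieldType) (D : 'M[F]_2) : 3%:R != 0 :> F ->
  D \in unitmx -> is_scalar_mx (D ^+ 3) -> ~~ is_scalar_mx D ->
  exists w k (P : 'M[F]_2), [/\ 3.-primitive_root w, k != 0, P \in unitmx &
    D *m P = k *: (P *m mx2 w 0 0 1)].
Proof.
move=> F3; elim/mx2_ind: D => a b c d; rewrite unitmx2 => det_neq0 /mx2_cube_scalar_tr2/[apply] tr2.
have disc : (a + d) ^+ 2 != 4%:R * (a * d - b * c).
  rewrite tr2 -subr_eq0 (_ : _ - _ = - (3%:R * (a * d - b * c))); last by ring.
  by rewrite oppr_eq0 mulf_neq0.
have [m1 [m2 [P [uP sum_m prod_m DP]]]] := mx2_diagonalize disc.
have [m1_neq0 m2_neq0] : m1 != 0 /\ m2 != 0.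
  by apply/andP; rewrite -negb_or -mulf_eq0 prod_m.
exists (m1 / m2), m2, P; split=> //.
  apply: (@prim_root3 _ (m1 / m2) F3).
  rewrite (_ : _ + 1 = ((m1 + m2) ^+ 2 - m1 * m2) / m2 ^+ 2); last by field.
  by rewrite sum_m prod_m tr2 subrr mul0r.
by rewrite DP scalemxAr scale_mx2 !mulr0 mulr1 mulrC divfK.
Qed.

Lemma mob_order3_conj (F : closedFieldType) (D : 'M[F]_2) : 3%:R != 0 :> F -> D \in unitmx ->
  (forall x, mob D (mob D (mob D x)) = x) -> ~ (forall x, mob D x = x) ->
  exists w (P : 'M[F]_2), [/\ 3.-primitive_root w, P \in unitmx &
    forall x, mob D (mob P x) = mob P (mob (mx2 w 0 0 1) x)].
Proof.
move=> F3 uD D3 D_nid.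
have D3_scalar : is_scalar_mx (D ^+ 3).
  apply: mob_id_scalar => x.
  by rewrite !exprS expr0 mulr1 -!mulmxE -!mobM ?unitmx_mul ?uD.
have D_nscalar : ~~ is_scalar_mx D.
  apply/negP => /is_scalar_mxP[l Dl]; apply: D_nid => x; rewrite Dl mob_scalar //.
  by move: uD; rewrite Dl scalar_mx2 unitmx2 mulr0 subr0; apply: contraNneq => ->; rewrite mulr0.
have [w [k [P [w_prim k_neq0 uP DP]]]] := mx2_cube_scalar_conj F3 uD D3_scalar D_nscalar.
have W_unit : mx2 w 0 0 1 \in unitmx.
  by rewrite unitmx2 mulr1 mulr0 subr0 (prim_root_eq0 w_prim).
by exists w, P; split=> // x; rewrite !mobM // DP mobZ.
Qed.

Lemma injective_nat_notin (T : eqType) (f : nat -> T) (s : seq T) :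
  injective f -> exists n, f n \notin s.
Proof.
move=> f_inj; set r := iota 0 (size s).+1.
have /hasP[n _ fn] : has (fun n => f n \notin s) r.
  apply/negPn/negP => /hasPn f_in.
  have r_sub : {subset map f r <= s} by move=> _ /mapP[n n_in ->]; apply/negPn/f_in.
  have r_uniq : uniq (map f r) by rewrite map_inj_uniq // iota_uniq.
  by have := uniq_leq_size r_uniq r_sub; rewrite size_map size_iota ltnn.
by exists n.
Qed.

Section AutPerm.
Variable F : fieldType.
Implicit Types (f h : P1cube F -> P1cube F) (s t : 'S_3).

Lemma aut_with_perm_uniq f s t : aut_with_perm f s -> aut_with_perm f t -> s = t.
Proof.
move=> [M [Munit fM]] [N [_ fN]]; apply/permP => i; apply/eqP/negPn/negP => st.
have fi (q : P1cube F) : mob (M i) (q (s i)) = mob (N i) (q (t i)).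
  by move: (etrans (esym (fM q)) (fN q)) => /ffunP/(_ i); rewrite !ffunE.
have := fi [ffun j => if j == s i then Some 0 else None].
have := fi [ffun => None]; rewrite !ffunE eqxx eq_sym (negbTE st) => <-.
by move/(mob_inj (Munit i)).
Qed.

Lemma aut_with_perm1 f : f =1 id -> aut_with_perm f 1.
Proof.
move=> f_id; exists (fun => 1%:M); split=> [i|p]; first exact: unitmx1.
by rewrite f_id; apply/ffunP => i; rewrite ffunE perm1 mob1.
Qed.

Lemma aut_with_perm_comp f (f' : P1cube F -> P1cube F) h s t :
  aut_with_perm f s -> aut_with_perm f' t -> h =1 f \o f' -> aut_with_perm h (s * t).
Proof.
move=> [M [Munit fM]] [N [Nunit f'N]] hE.
exists (fun i => M i *m N (s i)); split=> [i|p]; first by rewrite unitmx_mul Munit Nunit.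
by rewrite hE /= fM f'N; apply/ffunP => i; rewrite !ffunE mobM // permM.
Qed.

End AutPerm.

Section Action.
Variables (F : fieldType) (gT : finGroupType) (G : {group gT}).
Variable act : gT -> P1cube F -> P1cube F.
Hypothesis actG : is_aut_action G act.

Lemma act_expg_perm g s : g \in G -> aut_with_perm (act g) s ->
  forall k, aut_with_perm (act (g ^+ k)%g) (s ^+ k)%g.
Proof.
have [_ [act1 actM]] := actG; move=> gG gs; elim=> [|k IHk].
  by rewrite !expg0; apply: aut_with_perm1 => p; rewrite act1.
by rewrite !expgS; apply: aut_with_perm_comp gs IHk _ => p; rewrite actM ?groupX.
Qed.

Lemma act_perm_expg_card g s : g \in G -> aut_with_perm (act g) s -> (s ^+ #|G|)%g = 1%g.
Proof.
move=> gG gs; apply: aut_with_perm_uniq (act_expg_perm gG gs #|G|) (aut_with_perm1 _) => p.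
by rewrite expg_cardG //; have [_ []] := actG.
Qed.

Lemma act_cyc3_exists g s : #|G| = 9%N -> g \in G -> (s != 1)%g -> aut_with_perm (act g) s ->
  exists2 h, h \in G & aut_with_perm (act h) cyc3.
Proof.
move=> cardG gG s_neq1 gs.
have s3 : (s ^+ 3 = 1)%g.
  have : (#[s]%g %| gcdn 9 6)%N.
    rewrite dvdn_gcd order_dvdn -cardG (act_perm_expg_card gG gs) /=.
    by rewrite eqxx -[6%N]/(3`!) -card_Sn -cardsT order_dvdG ?inE.
  by rewrite order_dvdn => /eqP.
have [s_eq|s_eq] := perm3_order3 s3 s_neq1; first by exists g => //; rewrite -s_eq.
exists (g ^+ 2)%g; first exact: groupX.
have -> : cyc3 = ((cyc3 ^+ 2) ^+ 2)%g by rewrite -expgM expgS cyc3_order3 mulg1.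
by rewrite -s_eq; apply: act_expg_perm.
Qed.

Lemma fixed_seq_not_inj g (gamma : nat -> P1cube F) : free_outside_finite G act ->
  g \in G -> (g != 1)%g -> (forall n, act g (gamma n) = gamma n) -> ~ injective gamma.
Proof.
move=> [s freeG] gG g_neq1 fixg /(injective_nat_notin s)[n]; apply/negP/negPn.
by apply: freeG; exists g.
Qed.

End Action.

Section CyclicAction.
Variables (F : numFieldType) (gT : finGroupType) (G : {group gT}).
Variables (act : gT -> P1cube F -> P1cube F) (g : gT) (M : 'I_3 -> 'M[F]_2).
Hypotheses (actG : is_aut_action G act) (gG : g \in G) (Munit : forall i, M i \in unitmx).
Hypothesis actg : forall p, act g p = [ffun i => mob (M i) (p (cyc3 i))].

Local Notation i0 := (@Ordinal 3 0 isT).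
Local Notation i1 := (@Ordinal 3 1 isT).
Local Notation i2 := (@Ordinal 3 2 isT).

Lemma ord3P (i : 'I_3) : [\/ i = i0, i = i1 | i = i2].
Proof.
by case: i => [[|[|[|//]]] ?]; [constructor 1 | constructor 2 | constructor 3]; apply: val_inj.
Qed.

Lemma cyc3_ord3 : [/\ cyc3 i0 = i1, cyc3 i1 = i2 & cyc3 i2 = i0].
Proof. by split; apply: val_inj; rewrite cyc3E. Qed.

Lemma inord_ord3 : [/\ inord 0 = i0, inord 1 = i1 & inord 2 = i2].
Proof. by split; apply: val_inj; rewrite /= inordK. Qed.

Definition monodromy := M i2 *m (M i0 *m M i1).

Definition chart (P : 'M[F]_2) (i : 'I_3) : 'M[F]_2 :=
  if i == i2 then P else if i == i1 then M i1 *m P else M i0 *m (M i1 *m P).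

Lemma chart_last P : chart P i2 = P.
Proof. by rewrite /chart eqxx. Qed.

Lemma monodromy_unit : monodromy \in unitmx.
Proof. by rewrite !unitmx_mul !Munit. Qed.

Lemma chart_unit P i : P \in unitmx -> chart P i \in unitmx.
Proof.
by move=> Punit; rewrite /chart; case: ifP => _; [|case: ifP => _]; rewrite ?unitmx_mul ?Munit.
Qed.

Lemma act_chart P p i : P \in unitmx ->
  act g (coord_change (chart P) p) i =
  if i == i2 then mob (monodromy *m P) (p i0) else mob (chart P i) (p (cyc3 i)).
Proof.
move=> Punit; have [c0 c1 c2] := cyc3_ord3.
rewrite actg !ffunE; case: (ord3P i) => ->; rewrite ?c0 ?c1 ?c2 mobM ?chart_unit //=.
by rewrite /chart /monodromy /= !mulmxA.
Qed.

Lemma act_expg3_last p : act (g ^+ 3)%g p i2 = mob monodromy (p i2).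
Proof.
have [_ [_ actM]] := actG; have [c0 c1 c2] := cyc3_ord3.
rewrite !expgS expg0 mulg1 actM ?groupM // actM // !actg !ffunE c2 c0 c1.
by rewrite /monodromy -!mobM ?unitmx_mul ?Munit.
Qed.

Lemma cyclic_elt_neq1 : g != 1%g.
Proof.
have [_ [act1 _]] := actG; apply: contra_neq cyc3_neq1 => g1.
by apply: (@aut_with_perm_uniq _ (act g)); [exists M | apply: aut_with_perm1 => p; rewrite g1 act1].
Qed.

Lemma monodromy_neq_id : free_outside_finite G act -> ~ (forall x, mob monodromy x = x).
Proof.
move=> freeG mono_id.
pose gamma n := coord_change (chart 1%:M) [ffun => Some (n%:R : F)].
(* the curve t |-> (M_0 M_1 t, M_1 t, t) would be fixed by g *)
apply: (fixed_seq_not_inj freeG gG cyclic_elt_neq1 (gamma := gamma)).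
  move=> n; apply/ffunP => i; rewrite act_chart ?unitmx1 // !ffunE.
  by case: ifP => [/eqP ->|_]; rewrite ?mulmx1 ?mono_id ?chart_last ?mob1.
move=> m n /ffunP/(_ i2); rewrite !ffunE chart_last !mob1 => -[] /eqP.
by rewrite eqr_nat => /eqP.
Qed.

Lemma order_cyclic_elt : #|G| = 9%N -> free_outside_finite G act -> #[g]%g = 9%N.
Proof.
move=> cardG freeG.
have g3_neq1 : (g ^+ 3 != 1)%g.
  apply: contra_not_neq (monodromy_neq_id freeG) => g3 x.
  by have [_ [act1 _]] := actG; have := act_expg3_last [ffun => x]; rewrite g3 act1 !ffunE.
have : (#[g]%g \in divisors 9)%N by rewrite -dvdn_divisors // -cardG order_dvdG.
by rewrite !inE; case/or3P => /eqP o_g //; rewrite -order_dvdn o_g in g3_neq1.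
Qed.

Lemma monodromy_order3 : #|G| = 9%N ->
  forall x, mob monodromy (mob monodromy (mob monodromy x)) = x.
Proof.
move=> cardG x; have [_ [act1 actM]] := actG.
have g9 : (g ^+ 3 * (g ^+ 3 * g ^+ 3) = 1)%g by rewrite -!expgD -(expg_cardG gG) cardG.
(* generalizing g ^+ 3 keeps [actM] from unfolding the power *)
move: (g ^+ 3)%g g9 (groupX 3 gG) act_expg3_last => h h9 hG act_h.
have := act1 [ffun => x]; rewrite -h9 !actM ?groupM // => /ffunP/(_ i2).
by rewrite !act_h !ffunE.
Qed.

Lemma act_chart_model P w : P \in unitmx ->
  (forall x, mob monodromy (mob P x) = mob P (mob (mx2 w 0 0 1) x)) ->
  forall p, act g (coord_change (chart P) p) = coord_change (chart P) (model_map w p).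
Proof.
move=> Punit DP p; apply/ffunP => i.
rewrite act_chart // /coord_change /model_map !ffunE; have [-> -> ->] := inord_ord3.
have -> : \matrix_(k < 2, l < 2) (if (val k == 0%N) && (val l == 0%N) then w
                        else if (val k == 1%N) && (val l == 1%N) then 1 else 0) = mx2 w 0 0 1.
  by apply/matrixP => k l; rewrite !mxE; case: (ord2P k) => ->; case: (ord2P l) => ->.
have [c0 c1 _] := cyc3_ord3.
by case: (ord3P i) => ->; rewrite /= ?c0 ?c1 // -mobM // chart_last.
Qed.

End CyclicAction.

Theorem lemma5p6 (R : realType) (gT : finGroupType) (G : {group gT})
  (act : gT -> P1cube (complex R) -> P1cube (complex R)) :
  #|G| = 9%N ->
  is_aut_action G act ->
  free_outside_finite G act ->
  permutes_factors_nontrivially G act ->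
  cyclic G /\
  exists g : gT, [/\ g \in G, <[g]>%g = G &
    exists (w : complex R) (N : 'I_3 -> 'M[complex R]_2),
      [/\ 3.-primitive_root w, (forall i, N i \in unitmx) &
          forall p, act g (coord_change N p) = coord_change N (model_map w p)]].
Proof.
move=> cardG actG freeG [g0 g0G [s [s_neq1 g0s]]].
have [g gG [M [Munit actg]]] := act_cyc3_exists actG cardG g0G s_neq1 g0s.
have genG : <[g]>%g = G.
  by apply/eqP; rewrite eqEcard cycle_subG gG -orderE (order_cyclic_elt actG gG Munit actg) ?cardG.
split; first by rewrite -genG cycle_cyclic.
exists g; split=> //.
have [|w [P [w_prim Punit DP]]] := mob_order3_conj _ (monodromy_unit Munit)
  (monodromy_order3 actG gG Munit actg cardG) (monodromy_neq_id actG gG Munit actg freeG).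
  by rewrite pnatr_eq0.
exists w, (chart M P); split=> // [i|]; first exact: chart_unit.
exact: act_chart_model.
Qed.
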